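(* Consider a multi-sender single-uniprior index-coding instance with binary messages, information-flow graph $\mathcal{G}$ and message graph $\mathcal{U}$. Let $\mathcal{T}_1,\dots,\mathcal{T}_k$ be pairwise vertex-disjoint connecting trees. Then \[ \tilde{\ell}^*(\mathcal{G},\mathcal{U}) \leq V_{\mathrm{out}}(\mathcal{G}) - \big(N_{\mathrm{conn}}(\mathcal{G},\mathcal{U}) + k\big), \] where $N_{\mathrm{conn}}(\mathcal{G},\mathcal{U})$ is the number of message-connected leaf SCCs of $\mathcal{G}$. In particular the bound holds with $k$ replaced by the maximum number of pairwise vertex-disjoint connecting trees.
   Context: Multi-sender single-uniprior index coding with binary messages: there are $n$ receivers and $n$ independent messages $x_1,\dots,x_n$, each a single bit uniformly distributed on $\{0,1\}$. Receiver $i$ knows $x_i$ a priori and requests a set of messages not containing $x_i$. The information-flow graph is the directed graph $\mathcal{G}=(\mathcal{V},\mathcal{A})$, $\mathcal{V}=\{1,\dots,n\}$, with an arc $(j\to i)$ iff receiver $i$ requests $x_j$. There are $S$ senders; sender $s$ knows a subset $\mathcal{M}_s$ of the messages, and every message is known to some sender. An index code consists of, for each sender $s$, an encoding function mapping the messages in $\mathcal{M}_s$ to $\ell_s$ bits, and for each receiver $i$ a decoding function that, from all senders' outputs together with $x_i$, returns every message requested by $i$, for all message values; its length is $\sum_s \ell_s$. $\tilde{\ell}^*(\mathcal{G},\mathcal{U})$ is the minimum length of an index code for the instance. The message graph $\mathcal{U}$ is the undirected graph on $\mathcal{V}$ with an edge $\{i,j\}$ iff some sender knows both $x_i$ and $x_j$.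 A leaf vertex of $\mathcal{G}$ has no outgoing arcs; $V_{\mathrm{out}}(\mathcal{G})$ is the number of non-leaf vertices. A leaf SCC of $\mathcal{G}$ is a strongly connected component with at least two vertices and no arc from it to a vertex outside it. A leaf SCC with vertex set $\mathcal{V}_S$ is message-connected iff the subgraph of $\mathcal{U}$ induced by $\mathcal{V}_S$ is connected. A connecting tree is a subgraph $\mathcal{T}=(\mathcal{V}^{\mathrm T},\mathcal{E}^{\mathrm T})$ of $\mathcal{U}$ that is a tree (connected, acyclic), such that every vertex of $\mathcal{V}^{\mathrm T}$ has at least one outgoing arc in $\mathcal{G}$ and all its outgoing arcs go to vertices in $\mathcal{V}^{\mathrm T}$, and no vertex of $\mathcal{V}^{\mathrm T}$ belongs to a message-connected leaf SCC of $\mathcal{G}$. *)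

From mathcomp Require Import all_boot.
From mathcomp Require Import boolp.
Set Implicit Arguments. Unset Strict Implicit. Unset Printing Implicit Defensive.

(* Vertices / receivers / messages are 'I_n.
   arc : rel 'I_n is the information-flow graph: arc j i  <=>  receiver i requests x_j.
   M : 'I_S -> {set 'I_n} gives the messages known to each sender. *)

Section IndexCoding.
Variables (n S : nat) (arc : rel 'I_n) (M : 'I_S -> {set 'I_n}).

Definition is_index_code (ell : 'I_S -> nat) : Prop :=
  exists E : forall s : 'I_S, {ffun 'I_n -> bool} -> (ell s).-tuple bool,
    (forall s (x y : {ffun 'I_n -> bool}),
        (forall j, j \in M s -> x j = y j) -> E s x = E s y) /\
    exists D : forall i : 'I_n, (forall s : 'I_S, (ell s).-tuple bool) -> bool -> 'I_n -> bool,
      forall (x : {ffun 'I_n -> bool}) (i j : 'I_n),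
        arc j i -> D i (fun s => E s x) (x i) j = x j.

Definition achievable_length (L : nat) : Prop :=
  exists ell : 'I_S -> nat, is_index_code ell /\ \sum_(s < S) ell s = L.

(* minimum length of an index code (0 if no code exists, which cannot happen
   when every message is known to some sender) *)
Definition ell_star : nat :=
  match pselect (exists L, `[< achievable_length L >]) with
  | left h => ex_minn h
  | right _ => 0
  end.

Definition V_out : nat := #|[set i : 'I_n | [exists j, arc i j]]|.

Definition U_edge (i j : 'I_n) : bool :=
  (i != j) && [exists s, (i \in M s) && (j \in M s)].

Definition scc (i : 'I_n) : {set 'I_n} := [set j | connect arc i j && connect arc j i].

Definition leaf_scc (C : {set 'I_n}) : Prop :=
  (exists i, C = scc i) /\ 2 <= #|C| /\
  (forall a b, a \in C -> arc a b -> b \in C).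

Definition induced_U_connected (C : {set 'I_n}) : Prop :=
  forall a b, a \in C -> b \in C ->
    connect [rel u v | U_edge u v && (u \in C) && (v \in C)] a b.

Definition msg_conn_leaf_scc (C : {set 'I_n}) : Prop :=
  leaf_scc C /\ induced_U_connected C.

Definition N_conn : nat := #|[set C : {set 'I_n} | `[< msg_conn_leaf_scc C >]]|.

(* A subgraph (VT, ET) of U; edges are 2-element vertex sets. *)
Definition tree_edge_rel (ET : {set {set 'I_n}}) : rel 'I_n :=
  fun a b => [set a; b] \in ET.

Definition is_subgraph_of_U (VT : {set 'I_n}) (ET : {set {set 'I_n}}) : Prop :=
  forall e, e \in ET -> exists a b, [/\ e = [set a; b], a \in VT, b \in VT & U_edge a b].

Definition is_tree (VT : {set 'I_n}) (ET : {set {set 'I_n}}) : Prop :=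
  [/\ is_subgraph_of_U VT ET,
      VT != set0,
      (forall a b, a \in VT -> b \in VT -> connect (tree_edge_rel ET) a b) &
      (forall c : seq 'I_n, 2 < size c -> ~ ucycle (tree_edge_rel ET) c)].

Definition connecting_tree (VT : {set 'I_n}) (ET : {set {set 'I_n}}) : Prop :=
  [/\ is_tree VT ET,
      (forall v, v \in VT -> exists w, arc v w),
      (forall v w, v \in VT -> arc v w -> w \in VT) &
      (forall v C, v \in VT -> msg_conn_leaf_scc C -> v \notin C)].

End IndexCoding.

From mathcomp Require Import all_boot all_algebra.
From mathcomp Require Import boolp zify.
Set Implicit Arguments. Unset Strict Implicit. Unset Printing Implicit Defensive.

(* Call the vertex sets of the trees and of the message-connected leaf SCCs
   blocks: they are pairwise disjoint, closed under outgoing arcs, consist of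
   non-leaf vertices and are connected in the message graph.  Every non-leaf
   vertex outside the blocks broadcasts its own message.  In a block B with
   root r, fix a spanning tree of U[B]; every other vertex v broadcasts
   x_v + x_(parent v), which a single sender knows.  These |B| - 1 bits
   determine x_v + x_r for all v in B, so a receiver in B, knowing its own
   message, recovers all of B, which contains all its requests.  Each block
   thus saves one bit. *)

Section ShortestPaths.
Variables (T : finType) (e : rel T).

Definition has_path_of_size (r v : T) (m : nat) : bool :=
  [exists p : m.-tuple T, path e r p && (last r p == v)].

(* [dist r v] is 0 when v is not reachable from r. *)
Definition dist (r v : T) : nat :=
  match pselect (exists m, has_path_of_size r v m) with
  | left H => ex_minn H
  | right _ => 0
  end.

Lemma has_path_of_sizeP r v p :
  path e r p -> last r p = v -> has_path_of_size r v (size p).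
Proof. by move=> pp lp; apply/existsP; exists (in_tuple p); rewrite /= pp lp eqxx. Qed.

Lemma dist_le_size r v p : path e r p -> last r p = v -> dist r v <= size p.
Proof.
move=> pp lp; rewrite /dist; case: pselect => [H|[]]; last first.
  by exists (size p); apply: has_path_of_sizeP pp lp.
by case: ex_minnP => m _; apply; apply: has_path_of_sizeP pp lp.
Qed.

Lemma shortest_path r v :
  connect e r v -> exists p, [/\ path e r p, last r p = v & size p = dist r v].
Proof.
case/connectP=> p0 pp0 lp0; rewrite /dist; case: pselect => [H|[]]; last first.
  by exists (size p0); apply: has_path_of_sizeP pp0 (esym lp0).
case: ex_minnP => m /existsP[p /andP[pp /eqP lp]] _.
by exists p; rewrite size_tuple.
Qed.

Definition parent (r v : T) : T := odflt v [pick w | e w v && (dist r w < dist r v)].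

Lemma parentP r v :
  connect e r v -> v != r -> e (parent r v) v && (dist r (parent r v) < dist r v).
Proof.
move=> /shortest_path[p [pp lp sp]] vr; rewrite /parent.
case: pickP => [w -> //|/(_ (last r (belast r p)))]; move: pp lp sp.
case/lastP: p => [_ /= vr'|q u]; first by rewrite vr' eqxx in vr.
rewrite belast_rcons rcons_path last_rcons size_rcons => /andP[pq eu] <- sq.
by rewrite /= eu -sq ltnS dist_le_size.
Qed.

Lemma dist_refl r : dist r r = 0.
Proof. by apply/eqP; rewrite -leqn0 (@dist_le_size r r [::]). Qed.

Lemma parent_refl r : parent r r = r.
Proof. by rewrite /parent; case: pickP => // w /andP[_]; rewrite dist_refl. Qed.

Lemma xor_root_determined (B : {pred T}) r (x y : T -> bool) :
  (forall u v, e u v -> u \in B) -> {in B, forall v, connect e r v} ->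
  {in B, forall v, v != r -> x v (+) x (parent r v) = y v (+) y (parent r v)} ->
  {in B, forall v, x v (+) x r = y v (+) y r}.
Proof.
move=> eB conn eq_par v vB; move: {2}(dist r v).+1 (ltnSn (dist r v)) => m.
elim: m v vB => [//|m IH] v vB dv.
have [->|vr] := eqVneq v r; first by rewrite !addbb.
have /andP[pv dp] := parentP (conn v vB) vr.
have := IH _ (eB _ _ pv) (leq_trans dp dv); have := eq_par v vB vr.
by case: (x v); case: (x r); case: (x (parent r v));
   case: (y v); case: (y r); case: (y (parent r v)).
Qed.

End ShortestPaths.

Section IndexCodes.
Variables (n S : nat) (arc : rel 'I_n) (M : 'I_S -> {set 'I_n}).

Lemma ell_star_le L : achievable_length arc M L -> ell_star arc M <= L.
Proof.
move=> achL; rewrite /ell_star; case: pselect => [H|[]]; last first.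
  by exists L; apply/asboolP.
by case: ex_minnP => m _; apply; apply/asboolP.
Qed.

(* A receiver decodes by picking any message vector consistent with the
   received bits and with its own message. *)
Lemma achievable_card_bits (X : finType) (P : {set X})
    (g : X -> {ffun 'I_n -> bool} -> bool) :
  (forall l, exists s, forall x y : {ffun 'I_n -> bool},
     {in M s, x =1 y} -> g l x = g l y) ->
  (forall i j, arc j i -> forall x y : {ffun 'I_n -> bool},
     x i = y i -> {in P, forall l, g l x = g l y} -> x j = y j) ->
  achievable_length arc M #|P|.
Proof.
move=> /choice[sender g_local] g_decodes.
pose A s := [set l in P | sender l == s].
exists (fun s => #|A s|); split; last first.
  rewrite -sum1_card (partition_big sender xpredT) //.
  by apply: eq_bigr => s _; rewrite -sum1_card; apply: eq_bigl => l; rewrite inE.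
pose E s x : #|A s|.-tuple bool := map_tuple (g^~ x) (enum_tuple (A s)).
exists E; split.
  move=> s x y xy; apply: val_inj; apply/eq_in_map => l.
  by rewrite mem_enum inE => /andP[_ /eqP sl]; apply: g_local; rewrite sl.
pose D i w b j :=
  if [pick y : {ffun 'I_n -> bool} | (y i == b) && [forall s, E s y == w s]]
    is Some y then y j else false.
exists D => x i j aji; rewrite /D; case: pickP => [y /andP[/eqP yi /forallP Ey]|].
  apply/esym/(g_decodes i j aji) => // l lP.
  have /eqP/(congr1 val)/eq_in_map yx := Ey (sender l).
  by apply/esym/yx; rewrite mem_enum inE lP eqxx.
by move/(_ x); rewrite eqxx /=; move/negbT/forallPn => [s]; rewrite eqxx.
Qed.

End IndexCodes.

Definition U_in n S (M : 'I_S -> {set 'I_n}) (B : {set 'I_n}) : rel 'I_n :=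
  [rel u v | U_edge M u v && (u \in B) && (v \in B)].

Section Blocks.
Variables (n S : nat) (arc : rel 'I_n) (M : 'I_S -> {set 'I_n}).
Variable Bl : {set {set 'I_n}}.
Hypothesis M_cover : forall j, exists s, j \in M s.
Hypothesis Bl_neq0 : {in Bl, forall B, B != set0}.
Hypothesis Bl_disjoint :
  {in Bl &, forall B1 B2 : {set 'I_n}, B1 != B2 -> [disjoint B1 & B2]}.
Hypothesis Bl_closed :
  {in Bl, forall (B : {set 'I_n}) j i, j \in B -> arc j i -> i \in B}.
Hypothesis Bl_nonleaf :
  {in Bl, forall (B : {set 'I_n}) v, v \in B -> exists w, arc v w}.
Hypothesis Bl_connected :
  {in Bl, forall B : {set 'I_n}, {in B &, forall a b, connect (U_in M B) a b}}.

Let block v := [pick B in Bl | v \in B].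
Let root (B : {set 'I_n}) := [pick u in B].
Let par v :=
  if block v is Some B then (if root B is Some r then parent (U_in M B) r v else v) else v.
Let roots := [set v | [exists B in Bl, root B == Some v]].
Let nonleaf := [set v | [exists w, arc v w]].

Lemma blockE B v : B \in Bl -> v \in B -> block v = Some B.
Proof.
move=> BBl vB; rewrite /block; case: pickP => [B' /andP[B'Bl vB']|/(_ B)].
  have [->//|neq] := eqVneq B' B.
  by rewrite (disjointFr (Bl_disjoint B'Bl BBl neq) vB') in vB.
by rewrite BBl vB.
Qed.

Lemma blockP v B : block v = Some B -> B \in Bl /\ v \in B.
Proof. by rewrite /block; case: pickP => // B' /andP[? ?] [<-]. Qed.

Lemma rootP B : B \in Bl -> exists2 r, root B = Some r & r \in B.
Proof.
move=> BBl; rewrite /root; case: pickP => [r rB|none]; first by exists r.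
by have /set0Pn[r] := Bl_neq0 BBl; rewrite none.
Qed.

Lemma root_in B r : root B = Some r -> r \in B.
Proof. by rewrite /root; case: pickP => [u uB [<-]|]. Qed.

Lemma in_roots v : (v \in roots) = [exists B in Bl, root B == Some v].
Proof. by rewrite inE. Qed.

Lemma card_roots : #|roots| = #|Bl|.
Proof.
pose blk v := odflt set0 (block v).
have blk_root B r : B \in Bl -> root B = Some r -> blk r = B.
  by move=> BBl /root_in rB; rewrite /blk (blockE BBl rB).
have -> : Bl = blk @: roots.
  apply/setP => B; apply/idP/imsetP => [BBl|[v]].
    have [r rtB _] := rootP BBl; exists r; last by rewrite (blk_root B r).
    by rewrite in_roots; apply/existsP; exists B; rewrite BBl rtB eqxx.
  by rewrite in_roots => /existsP[B' /andP[B'Bl /eqP rtB']] ->; rewrite (blk_root B').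
apply/esym/card_in_imset => v1 v2.
rewrite !in_roots => /existsP[B1 /andP[B1Bl /eqP rt1]] /existsP[B2 /andP[B2Bl /eqP rt2]].
by rewrite (blk_root B1) // (blk_root B2) // => B12; move: rt1; rewrite B12 rt2 => -[].
Qed.

Lemma roots_sub_nonleaf : roots \subset nonleaf.
Proof.
apply/subsetP => v; rewrite in_roots => /existsP[B /andP[BBl /eqP/root_in vB]].
by have [w avw] := Bl_nonleaf BBl vB; rewrite inE; apply/existsP; exists w.
Qed.

Lemma card_blocks_le : #|Bl| <= V_out arc.
Proof. by rewrite -card_roots; apply: subset_leq_card roots_sub_nonleaf. Qed.

Lemma parE B r v : B \in Bl -> root B = Some r -> v \in B ->
  par v = parent (U_in M B) r v.
Proof. by move=> BBl rtB vB; rewrite /par (blockE BBl vB) rtB. Qed.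

Lemma par_edge B r v : B \in Bl -> root B = Some r -> v \in B -> v != r ->
  U_in M B (par v) v.
Proof.
move=> BBl rtB vB vr; rewrite (parE BBl rtB vB).
by case/andP: (parentP (Bl_connected BBl (root_in rtB) vB) vr).
Qed.

Lemma par_cases v : par v = v \/ U_edge M (par v) v.
Proof.
case Ev: (block v) => [B|]; last by left; rewrite /par Ev.
have [BBl vB] := blockP Ev.
have [r rtB _] := rootP BBl.
have [->|vr] := eqVneq v r.
  by left; rewrite (parE BBl rtB (root_in rtB)) parent_refl.
by right; case/andP: (par_edge BBl rtB vB vr) => /andP[].
Qed.

Lemma par_sender v : exists s, (v \in M s) && (par v \in M s).
Proof.
case: (par_cases v) => [->|/andP[_ /existsP[s /andP[ps vs]]]].
  by have [s vs] := M_cover v; exists s; rewrite vs.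
by exists s; rewrite ps vs.
Qed.

Lemma nonroot_sent B r v : B \in Bl -> root B = Some r -> v \in B -> v != r ->
  v \in nonleaf :\: roots.
Proof.
move=> BBl rtB vB vr; rewrite !inE; apply/andP; split; last first.
  by have [w avw] := Bl_nonleaf BBl vB; apply/existsP; exists w.
apply: contra vr => /existsP[B' /andP[B'Bl /eqP rtB']].
have BB' : B' = B by move: (blockE B'Bl (root_in rtB')); rewrite (blockE BBl vB) => -[].
by move: rtB; rewrite -BB' rtB' => -[/eqP].
Qed.

Let bit v (x : {ffun 'I_n -> bool}) :=
  if par v == v then x v else x v (+) x (par v).

Lemma blocks_achievable : achievable_length arc M (V_out arc - #|Bl|).
Proof.
rewrite -card_roots -cardsDS ?roots_sub_nonleaf //.
apply: (achievable_card_bits (g := bit)).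
  move=> v; have [s /andP[vs ps]] := par_sender v.
  by exists s => x y xy; rewrite /bit !xy.
move=> i j aji x y xyi same_bits.
case Ej: (block j) => [B|]; last first.
  have jA : j \in nonleaf :\: roots.
    rewrite !inE; apply/andP; split; last by apply/existsP; exists i.
    apply/negP => /existsP[B /andP[BBl /eqP/root_in jB]].
    by rewrite (blockE BBl jB) in Ej.
  by have := same_bits j jA; rewrite /bit /par Ej eqxx.
have [BBl jB] := blockP Ej; have [r rtB rB] := rootP BBl.
have xor_root : {in B, forall v, x v (+) x r = y v (+) y r}.
  apply: (xor_root_determined (e := U_in M B)) => [u w /andP[/andP[]]//||v vB vr].
    by move=> v; apply: Bl_connected.
  have /andP[/andP[/andP[pv _] _] _] := par_edge BBl rtB vB vr.
  move: (same_bits v (nonroot_sent BBl rtB vB vr)).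
  by rewrite /bit (negbTE pv) (parE BBl rtB vB).
have := xor_root i (Bl_closed BBl jB aji); have := xor_root j jB; rewrite xyi.
by case: (x j); case: (x r); case: (y i); case: (y j); case: (y r).
Qed.

End Blocks.

Section LeafSCCs.
Variables (n S : nat) (arc : rel 'I_n) (M : 'I_S -> {set 'I_n}).

Lemma scc_eq i v : v \in scc arc i -> scc arc v = scc arc i.
Proof.
rewrite inE => /andP[iv vi]; apply/setP => u; rewrite !inE.
by apply/andP/andP => -[u1 u2]; split; apply: connect_trans; eassumption.
Qed.

Lemma leaf_scc_disjoint C1 C2 : leaf_scc arc C1 -> leaf_scc arc C2 -> C1 != C2 ->
  [disjoint C1 & C2].
Proof.
move=> [[i1 ->] _] [[i2 ->] _]; apply: contraR; rewrite -setI_eq0 => /set0Pn[v].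
by rewrite inE => /andP[/scc_eq <- /scc_eq <-].
Qed.

Lemma leaf_scc_neq0 C : leaf_scc arc C -> C != set0.
Proof. by move=> [_ [C2 _]]; apply: contraTneq C2 => ->; rewrite cards0. Qed.

Lemma leaf_scc_nonleaf C v : leaf_scc arc C -> v \in C -> exists w, arc v w.
Proof.
move=> [[i ->] [C2 _]] vC.
have /card_gt0P[u] : 0 < #|scc arc i :\ v| by rewrite (cardsD1 v) vC in C2.
rewrite !inE => /andP[uv /andP[iu _]]; move: vC; rewrite inE => /andP[_ vi].
case/connectP: (connect_trans vi iu) => -[|w p] /= => [_ uE|/andP[vw _] _].
  by rewrite uE eqxx in uv.
by exists w.
Qed.

Lemma connecting_tree_connected VT ET : connecting_tree arc M VT ET ->
  {in VT &, forall a b, connect (U_in M VT) a b}.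
Proof.
move=> [[sub _ conn _] _ _ _] a b aT bT.
apply: connect_sub (conn a b aT bT) => u w uw.
have [a' [b' [E a'T b'T /andP[ne /existsP[s /andP[a's b's]]]]]] := sub _ uw.
have in_ab z : z \in [set a'; b'] -> (z \in M s) && (z \in VT).
  by rewrite !inE => /orP[]/eqP->; rewrite ?a's ?b's ?a'T ?b'T.
have [u_ab w_ab] : u \in [set a'; b'] /\ w \in [set a'; b'].
  by rewrite -E !inE !eqxx orbT.
have /andP[us uT] := in_ab _ u_ab; have /andP[ws wT] := in_ab _ w_ab.
apply: connect1; rewrite /U_in /= /U_edge uT wT !andbT; apply/andP; split.
  apply: contraNneq ne => uw'; move: E; rewrite uw' setUid => /setP E.
  by move: (E a') (E b'); rewrite !inE !eqxx /= orbT => /eqP-> /eqP->.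
by apply/existsP; exists s; rewrite us ws.
Qed.

End LeafSCCs.

Section TreeBlocks.
Variables (n S : nat) (arc : rel 'I_n) (M : 'I_S -> {set 'I_n}).
Variables (k : nat) (T : 'I_k -> {set 'I_n} * {set {set 'I_n}}).
Hypothesis T_conn : forall a, connecting_tree arc M (T a).1 (T a).2.
Hypothesis T_disj : forall a b, a != b -> [disjoint (T a).1 & (T b).1].

Definition tree_scc_blocks : {set {set 'I_n}} :=
  [set (T a).1 | a in 'I_k] :|: [set C | `[< msg_conn_leaf_scc arc M C >]].

Lemma tree_scc_blocksP B : B \in tree_scc_blocks ->
  (exists a, B = (T a).1) \/ msg_conn_leaf_scc arc M B.
Proof. by rewrite !inE => /orP[/imsetP[a _ ->]|/asboolP]; [left; exists a|right]. Qed.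

Lemma tree_neq0 a : (T a).1 != set0.
Proof. by have [[_ ? _ _] _ _ _] := T_conn a. Qed.

Lemma tree_scc_disjoint a C : msg_conn_leaf_scc arc M C -> [disjoint (T a).1 & C].
Proof.
move=> HC; have [_ _ _ TC] := T_conn a.
by apply/pred0P => v /=; apply/negP => /andP[/TC/(_ HC)/negP].
Qed.

Lemma card_tree_scc_blocks : #|tree_scc_blocks| = k + N_conn arc M.
Proof.
have T_inj : injective (fun a => (T a).1).
  move=> a b /= Tab; apply/eqP; apply: contraT => /T_disj.
  by rewrite Tab -setI_eq0 setIid (negbTE (tree_neq0 b)).
rewrite cardsU card_imset // card_ord disjoint_setI0 ?cards0 ?subn0 //.
apply/pred0P => B /=; rewrite !inE; apply/negP.
case/andP=> /imsetP[a _ ->] /asboolP/(tree_scc_disjoint a).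
by rewrite -setI_eq0 setIid (negbTE (tree_neq0 a)).
Qed.

Lemma tree_scc_blocks_neq0 : {in tree_scc_blocks, forall B, B != set0}.
Proof. by move=> B /tree_scc_blocksP[[a ->]|[/leaf_scc_neq0]] //; apply: tree_neq0. Qed.

Lemma tree_scc_blocks_disjoint :
  {in tree_scc_blocks &, forall B1 B2 : {set 'I_n}, B1 != B2 -> [disjoint B1 & B2]}.
Proof.
move=> B1 B2 /tree_scc_blocksP[[a ->]|C1] /tree_scc_blocksP[[b ->]|C2] neq.
- by apply: T_disj; apply: contraNneq neq => ->.
- exact: tree_scc_disjoint.
- by rewrite disjoint_sym; apply: tree_scc_disjoint.
- exact: leaf_scc_disjoint C1.1 C2.1 neq.
Qed.

Lemma tree_scc_blocks_closed :
  {in tree_scc_blocks, forall (B : {set 'I_n}) j i, j \in B -> arc j i -> i \in B}.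
Proof.
move=> B /tree_scc_blocksP[[a ->]|[[_ [_ closed]] _]] //.
by have [_ _ closed _] := T_conn a.
Qed.

Lemma tree_scc_blocks_nonleaf :
  {in tree_scc_blocks, forall (B : {set 'I_n}) v, v \in B -> exists w, arc v w}.
Proof.
move=> B /tree_scc_blocksP[[a ->]|[/leaf_scc_nonleaf //]].
by have [_ nonleaf _ _] := T_conn a.
Qed.

Lemma tree_scc_blocks_connected :
  {in tree_scc_blocks, forall B : {set 'I_n},
    {in B &, forall a b, connect (U_in M B) a b}}.
Proof.
move=> B /tree_scc_blocksP[[a ->]|[_ conn]]; first exact: connecting_tree_connected.
by move=> u v uB vB; apply: conn.
Qed.

End TreeBlocks.

Theorem theorem6 (n S : nat) (arc : rel 'I_n) (M : 'I_S -> {set 'I_n})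
  (arc_irr : forall i : 'I_n, ~~ arc i i)
  (M_cover : forall j : 'I_n, exists s : 'I_S, j \in M s)
  (k : nat) (T : 'I_k -> {set 'I_n} * {set {set 'I_n}})
  (T_conn : forall a : 'I_k, connecting_tree arc M (T a).1 (T a).2)
  (T_disj : forall a b : 'I_k, a != b -> [disjoint (T a).1 & (T b).1]) :
  ((ell_star arc M)%:Z <= (V_out arc)%:Z - ((N_conn arc M)%:Z + k%:Z))%R.
Proof.
have neq0 := tree_scc_blocks_neq0 T_conn.
have disj := tree_scc_blocks_disjoint T_conn T_disj.
have nonleaf := tree_scc_blocks_nonleaf T_conn.
have achievable := blocks_achievable M_cover neq0 disj
  (tree_scc_blocks_closed T_conn) nonleaf (tree_scc_blocks_connected T_conn).
have := ell_star_le achievable; have := card_blocks_le neq0 disj nonleaf.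
by rewrite card_tree_scc_blocks //; lia.
Qed.
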